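(* Let $(A,\cdot)$ be a commutative associative algebra, $\circ:A\otimes A\to A$ a bilinear operation, and define $x\star y=x\circ y-2y\circ x$. Then the identities $$2(x\circ y)\cdot z-2(y\circ x)\cdot z=y\cdot(x\circ z)-x\cdot(y\circ z),\qquad 2x\circ(y\cdot z)=(z\cdot x)\circ y+z\cdot(x\circ y)\quad(\forall x,y,z\in A)$$ hold if and only if the identities $$(x\cdot y)\star z=x\cdot(y\star z),\qquad (x\star y)\cdot z-(y\star x)\cdot z=x\star(y\cdot z)-y\star(x\cdot z)\quad(\forall x,y,z\in A)$$ hold. In particular, $(A,\cdot,\circ)$ is an admissible Novikov-Poisson algebra if and only if $(A,\cdot,\star)$ is a Novikov-Poisson algebra.
   Context: All vector spaces are finite-dimensional over a field $\mathbb F$ of characteristic $0$. For a bilinear operation $\circ$ write $[x,y]=x\circ y-y\circ x$. An anti-pre-Lie algebra is $(A,\circ)$ with $x\circ(y\circ z)-y\circ(x\circ z)=[y,x]\circ z$ and $[x,y]\circ z+[y,z]\circ x+[z,x]\circ y=0$; an admissible Novikov algebra is $(A,\circ)$ with $x\circ(y\circ z)-y\circ(x\circ z)=[y,x]\circ z$ and $2x\circ[y,z]=(x\circ y)\circ z-(x\circ z)\circ y$ (it is automatically anti-pre-Lie). An anti-pre-Lie Poisson algebra is $(A,\cdot,\circ)$ with $(A,\cdot)$ commutative associative, $(A,\circ)$ anti-pre-Lie, satisfying the first pair of identities in the claim; it is an admissible Novikov-Poisson algebra if moreover $(A,\circ)$ is admissible Novikov. A Novikov algebra is $(A,\star)$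 with $(x\star y)\star z-x\star(y\star z)=(y\star x)\star z-y\star(x\star z)$ and $(x\star y)\star z=(x\star z)\star y$. A Novikov-Poisson algebra is $(A,\cdot,\star)$ with $(A,\cdot)$ commutative associative, $(A,\star)$ Novikov, satisfying the second pair of identities in the claim. *)

From HB Require Import structures.
From mathcomp Require Import all_boot all_algebra.
Set Implicit Arguments. Unset Strict Implicit. Unset Printing Implicit Defensive.
Import GRing.Theory.
Local Open Scope ring_scope.

Section Defs.
Variables (F : fieldType) (A : lmodType F).

Definition bilinear_op (op : A -> A -> A) : Prop :=
  (forall (a : F) (x y z : A), op (a *: x + y) z = a *: op x z + op y z) /\
  (forall (a : F) (x y z : A), op z (a *: x + y) = a *: op z x + op z y).

Definition commutator (op : A -> A -> A) (x y : A) : A := op x y - op y x.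

Definition comm_assoc_alg (dot : A -> A -> A) : Prop :=
  bilinear_op dot /\ commutative dot /\ associative dot.

Definition anti_pre_Lie (op : A -> A -> A) : Prop :=
  bilinear_op op /\
  (forall x y z, op x (op y z) - op y (op x z) = op (commutator op y x) z) /\
  (forall x y z, op (commutator op x y) z + op (commutator op y z) x
                 + op (commutator op z x) y = 0).

Definition admissible_Novikov (op : A -> A -> A) : Prop :=
  bilinear_op op /\
  (forall x y z, op x (op y z) - op y (op x z) = op (commutator op y x) z) /\
  (forall x y z, 2%:R *: op x (commutator op y z) = op (op x y) z - op (op x z) y).

Definition Novikov (op : A -> A -> A) : Prop :=
  bilinear_op op /\
  (forall x y z, op (op x y) z - op x (op y z) = op (op y x) z - op y (op x z)) /\
  (forall x y z, op (op x y) z = op (op x z) y).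

Definition APLP_identities (dot circ : A -> A -> A) : Prop :=
  (forall x y z, 2%:R *: dot (circ x y) z - 2%:R *: dot (circ y x) z
                 = dot y (circ x z) - dot x (circ y z)) /\
  (forall x y z, 2%:R *: circ x (dot y z) = circ (dot z x) y + dot z (circ x y)).

Definition NP_identities (dot star : A -> A -> A) : Prop :=
  (forall x y z, star (dot x y) z = dot x (star y z)) /\
  (forall x y z, dot (star x y) z - dot (star y x) z
                 = star x (dot y z) - star y (dot x z)).

Definition anti_pre_Lie_Poisson (dot circ : A -> A -> A) : Prop :=
  comm_assoc_alg dot /\ anti_pre_Lie circ /\ APLP_identities dot circ.

Definition admissible_Novikov_Poisson (dot circ : A -> A -> A) : Prop :=
  anti_pre_Lie_Poisson dot circ /\ admissible_Novikov circ.

Definition Novikov_Poisson (dot star : A -> A -> A) : Prop :=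
  comm_assoc_alg dot /\ Novikov star /\ NP_identities dot star.

End Defs.

From HB Require Import structures.
From mathcomp Require Import all_boot all_algebra.
From mathcomp Require Import ring.
Set Implicit Arguments.
Unset Strict Implicit.
Unset Printing Implicit Defensive.
Import GRing.Theory.
Local Open Scope ring_scope.

(* Each identity of one system, multiplied by 1, 2, 3 or 9, is an explicit
   integer combination of permuted instances of the identities of the other
   system, so the equivalences hold as soon as 2 and 3 are invertible.  The
   factors 3 and 9 come from inverting the twist: 3 x∘y = -(x⋆y + 2 y⋆x).
   On the Novikov side it pays to pass through the cyclic anti-pre-Lie
   identity, which is itself three times a combination of the admissible
   Novikov identities.  Each combination is checked coordinatewise in a basis,
   where it becomes a polynomial identity. *)

Section BilinearOp.
Variables (F : fieldType) (A : lmodType F) (op : A -> A -> A).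
Hypothesis op_bil : bilinear_op op.

Lemma opDl u v w : op (u + v) w = op u w + op v w.
Proof. by have := op_bil.1 1 u v w; rewrite !scale1r. Qed.

Lemma opDr u v w : op w (u + v) = op w u + op w v.
Proof. by have := op_bil.2 1 u v w; rewrite !scale1r. Qed.

Lemma op0l w : op 0 w = 0.
Proof. by apply: (@addrI _ (op 0 w)); rewrite -opDl !addr0. Qed.

Lemma op0r w : op w 0 = 0.
Proof. by apply: (@addrI _ (op w 0)); rewrite -opDr !addr0. Qed.

Lemma opZl a u w : op (a *: u) w = a *: op u w.
Proof. by have := op_bil.1 a u 0 w; rewrite !addr0 op0l addr0. Qed.

Lemma opZr a u w : op w (a *: u) = a *: op w u.
Proof. by have := op_bil.2 a u 0 w; rewrite !addr0 op0r addr0. Qed.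

Lemma opNl u w : op (- u) w = - op u w.
Proof. by rewrite -scaleN1r opZl scaleN1r. Qed.

Lemma opNr u w : op w (- u) = - op w u.
Proof. by rewrite -scaleN1r opZr scaleN1r. Qed.

Lemma opBl u v w : op (u - v) w = op u w - op v w.
Proof. by rewrite opDl opNl. Qed.

Lemma opBr u v w : op w (u - v) = op w u - op w v.
Proof. by rewrite opDr opNr. Qed.

End BilinearOp.

Section Coordinates.
Variables (F : fieldType) (A : vectType F).

Lemma coord_vbasis_inj (u v : A) :
  (forall i, coord (vbasis fullv) i u = coord (vbasis fullv) i v) -> u = v.
Proof.
move=> eq_uv; rewrite (coord_vbasis (memvf u)) (coord_vbasis (memvf v)).
by apply: eq_bigr => i _; rewrite eq_uv.
Qed.

Variable i : 'I_(\dim (@fullv F A)).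
Local Notation crd := (coord (vbasis fullv) i).

Lemma coord_vbasisD (u v : A) : crd (u + v) = crd u + crd v.
Proof. exact: linearD. Qed.

Lemma coord_vbasisB (u v : A) : crd (u - v) = crd u - crd v.
Proof. exact: linearB. Qed.

Lemma coord_vbasisN (u : A) : crd (- u) = - crd u.
Proof. exact: linearN. Qed.

Lemma coord_vbasisZ a (u : A) : crd (a *: u) = a * crd u.
Proof. exact: linearZ. Qed.

End Coordinates.

Section Defects.
Variables (F : fieldType) (A : lmodType F).
Implicit Types (op dot circ star : A -> A -> A) (x y z : A).

Definition twist op x y := op x y - 2%:R *: op y x.

Definition apl_defect op x y z :=
  op x (op y z) - op y (op x z) - op (commutator op y x) z.

Definition apl_cyclic_defect op x y z :=
  op (commutator op x y) z + op (commutator op y z) x + op (commutator op z x) y.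

Definition adm_defect op x y z :=
  2%:R *: op x (commutator op y z) - (op (op x y) z - op (op x z) y).

Definition nov_lsym_defect op x y z :=
  op (op x y) z - op x (op y z) - (op (op y x) z - op y (op x z)).

Definition nov_rcomm_defect op x y z := op (op x y) z - op (op x z) y.

Definition aplp1_defect dot circ x y z :=
  2%:R *: dot (circ x y) z - 2%:R *: dot (circ y x) z
  - (dot y (circ x z) - dot x (circ y z)).

Definition aplp2_defect dot circ x y z :=
  2%:R *: circ x (dot y z) - (circ (dot z x) y + dot z (circ x y)).

Definition np1_defect dot star x y z := star (dot x y) z - dot x (star y z).

Definition np2_defect dot star x y z :=
  dot (star x y) z - dot (star y x) z - (star x (dot y z) - star y (dot x z)).

Lemma anti_pre_LieE op : anti_pre_Lie op <->
  [/\ bilinear_op op, forall x y z, apl_defect op x y z = 0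
    & forall x y z, apl_cyclic_defect op x y z = 0].
Proof.
rewrite /anti_pre_Lie /apl_defect /apl_cyclic_defect.
split=> [[bil [h1 h2]] | [bil h1 h2]].
  by split=> // x y z; rewrite h1 subrr.
by split=> //; split=> // x y z; apply: subr0_eq; apply: h1.
Qed.

Lemma admissible_NovikovE op : admissible_Novikov op <->
  [/\ bilinear_op op, forall x y z, apl_defect op x y z = 0
    & forall x y z, adm_defect op x y z = 0].
Proof.
rewrite /admissible_Novikov /apl_defect /adm_defect.
split=> [[bil [h1 h2]] | [bil h1 h2]].
  by split=> // x y z; [rewrite h1 subrr | rewrite h2 subrr].
by split=> //; split=> x y z; apply: subr0_eq; [apply: h1 | apply: h2].
Qed.

Lemma NovikovE op : Novikov op <->
  [/\ bilinear_op op, forall x y z, nov_lsym_defect op x y z = 0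
    & forall x y z, nov_rcomm_defect op x y z = 0].
Proof.
rewrite /Novikov /nov_lsym_defect /nov_rcomm_defect.
split=> [[bil [h1 h2]] | [bil h1 h2]].
  by split=> // x y z; [rewrite h1 subrr | rewrite h2 subrr].
by split=> //; split=> x y z; apply: subr0_eq; [apply: h1 | apply: h2].
Qed.

Lemma APLP_identitiesE dot circ : APLP_identities dot circ <->
  (forall x y z, aplp1_defect dot circ x y z = 0) /\
  (forall x y z, aplp2_defect dot circ x y z = 0).
Proof.
rewrite /APLP_identities /aplp1_defect /aplp2_defect.
split=> -[h1 h2]; split=> x y z; first by rewrite h1 subrr.
- by rewrite h2 subrr.
- by apply: subr0_eq; apply: h1.
- by apply: subr0_eq; apply: h2.
Qed.

Lemma NP_identitiesE dot star : NP_identities dot star <->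
  (forall x y z, np1_defect dot star x y z = 0) /\
  (forall x y z, np2_defect dot star x y z = 0).
Proof.
rewrite /NP_identities /np1_defect /np2_defect.
split=> -[h1 h2]; split=> x y z; first by rewrite h1 subrr.
- by rewrite h2 subrr.
- by apply: subr0_eq; apply: h1.
- by apply: subr0_eq; apply: h2.
Qed.

Lemma twist_bilinear circ : bilinear_op circ -> bilinear_op (twist circ).
Proof.
move=> bil; split=> a u v w; rewrite /twist.
  rewrite (opDl bil) (opZl bil) (opDr bil) (opZr bil).
  by rewrite scalerDr scalerBr !scalerA mulrC opprD addrACA.
rewrite (opDl bil) (opZl bil) (opDr bil) (opZr bil).
by rewrite scalerDr scalerBr !scalerA mulrC opprD addrACA.
Qed.

End Defects.

Section TwistIdentities.
Variables (F : fieldType) (A : vectType F) (circ : A -> A -> A).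
Hypothesis circ_bil : bilinear_op circ.
Implicit Types x y z : A.
Local Notation star := (twist circ).

Local Ltac circ_ring :=
  apply: coord_vbasis_inj => i;
  rewrite /twist /apl_defect /apl_cyclic_defect /adm_defect /nov_lsym_defect
    /nov_rcomm_defect /commutator;
  rewrite ?(opBl circ_bil, opBr circ_bil, opDl circ_bil, opDr circ_bil,
            opZl circ_bil, opZr circ_bil, opNl circ_bil, opNr circ_bil);
  rewrite ?(coord_vbasisD, coord_vbasisB, coord_vbasisN, coord_vbasisZ); ring.

Lemma apl_cyclic_defect_comb x y z :
  3%:R *: apl_cyclic_defect circ x y z =
    2%:R *: (apl_defect circ x y z - apl_defect circ x z y
             + apl_defect circ y z x)
    - (adm_defect circ x y z - adm_defect circ y x z + adm_defect circ z x y).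
Proof. circ_ring. Qed.

Lemma nov_lsym_defect_twist x y z :
  nov_lsym_defect star x y z =
    2%:R *: (apl_defect circ x z y - apl_defect circ y z x
             - adm_defect circ z x y)
    - apl_defect circ x y z + 4%:R *: apl_cyclic_defect circ x y z.
Proof. circ_ring. Qed.

Lemma nov_rcomm_defect_twist x y z :
  nov_rcomm_defect star x y z =
    adm_defect circ y x z - adm_defect circ z x y - 2%:R *: apl_defect circ y z x
    + apl_cyclic_defect circ x y z.
Proof. circ_ring. Qed.

Lemma apl_defect_by_twist x y z :
  9%:R *: apl_defect circ x y z =
    2%:R *: (nov_lsym_defect star y z x - nov_lsym_defect star x z y)
    - nov_lsym_defect star x y z - 6%:R *: nov_rcomm_defect star z x y.
Proof. circ_ring. Qed.

Lemma adm_defect_by_twist x y z :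
  9%:R *: adm_defect circ x y z =
    2%:R *: (nov_lsym_defect star x y z - nov_lsym_defect star x z y)
    - 4%:R *: nov_lsym_defect star y z x
    - 3%:R *: nov_rcomm_defect star x y z.
Proof. circ_ring. Qed.

End TwistIdentities.

Section PoissonIdentities.
Variables (F : fieldType) (A : vectType F) (dot circ : A -> A -> A).
Hypotheses (dot_bil : bilinear_op dot) (dotC : commutative dot).
Hypothesis circ_bil : bilinear_op circ.
Implicit Types x y z : A.
Local Notation star := (twist circ).

Let dot_circl a b c : dot (circ a b) c = dot c (circ a b).
Proof. exact: dotC. Qed.

Local Ltac poisson_ring x y z :=
  apply: coord_vbasis_inj => i;
  rewrite /twist /aplp1_defect /aplp2_defect /np1_defect /np2_defect;
  rewrite ?(opBl circ_bil, opBr circ_bil, opDl circ_bil, opDr circ_bil,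
            opZl circ_bil, opZr circ_bil, opNl circ_bil, opNr circ_bil,
            opBl dot_bil, opBr dot_bil, opDl dot_bil, opDr dot_bil,
            opZl dot_bil, opZr dot_bil, opNl dot_bil, opNr dot_bil);
  (* normal form of products: [circ]-factor on the right, variables sorted *)
  rewrite ?dot_circl ?(dotC y x) ?(dotC z x) ?(dotC z y);
  rewrite ?(coord_vbasisD, coord_vbasisB, coord_vbasisN, coord_vbasisZ); ring.

Lemma np1_defect_twist x y z :
  np1_defect dot star x y z =
    aplp2_defect dot circ y x z - aplp2_defect dot circ y z x
    - aplp2_defect dot circ z x y - aplp1_defect dot circ y z x.
Proof. poisson_ring x y z. Qed.

Lemma np2_defect_twist x y z :
  2%:R *: np2_defect dot star x y z =
    - aplp2_defect dot circ x y z - 4%:R *: aplp2_defect dot circ y x z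
    - 5%:R *: np1_defect dot star z x y.
Proof. poisson_ring x y z. Qed.

Lemma aplp2_defect_by_twist x y z :
  3%:R *: aplp2_defect dot circ x y z =
    np1_defect dot star z x y - 4%:R *: np1_defect dot star z y x
    + 2%:R *: np2_defect dot star x y z.
Proof. poisson_ring x y z. Qed.

Lemma aplp1_defect_by_twist x y z :
  aplp1_defect dot circ x y z =
    aplp2_defect dot circ x z y - aplp2_defect dot circ x y z
    - aplp2_defect dot circ y z x - np1_defect dot star z x y.
Proof. poisson_ring x y z. Qed.

End PoissonIdentities.

Section CharZero.
Variable F : fieldType.
Hypothesis charF0 : [pchar F] =i pred0.

Lemma natrS_neq0 n : (n.+1%:R : F) != 0.
Proof. by have /pcharf0P -> := charF0. Qed.

Lemma scalerS_eq0 (A : lmodType F) n (v : A) : n.+1%:R *: v = 0 -> v = 0.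
Proof. by move/eqP; rewrite scaler_eq0 (negPf (natrS_neq0 n)) => /eqP. Qed.

Variables (A : vectType F) (circ : A -> A -> A).

Lemma admissible_Novikov_anti_pre_Lie :
  admissible_Novikov circ -> anti_pre_Lie circ.
Proof.
case/admissible_NovikovE=> bil apl0 adm0; apply/anti_pre_LieE; split=> // x y z.
apply: (@scalerS_eq0 _ 2).
by rewrite apl_cyclic_defect_comb // !apl0 !adm0
  !(scaler0, subrr, addr0, subr0, oppr0).
Qed.

Lemma admissible_Novikov_twist :
  bilinear_op circ -> admissible_Novikov circ <-> Novikov (twist circ).
Proof.
move=> bil; split.
  move=> adm.
  have /anti_pre_LieE[_ apl0 cyc0] := admissible_Novikov_anti_pre_Lie adm.
  case/admissible_NovikovE: adm => _ _ adm0.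
  apply/NovikovE; split=> [|x y z|x y z]; first exact: twist_bilinear.
    by rewrite nov_lsym_defect_twist // !apl0 !adm0 cyc0
      !(scaler0, subrr, addr0, subr0, oppr0).
  by rewrite nov_rcomm_defect_twist // !apl0 !adm0 cyc0
    !(scaler0, subrr, addr0, subr0, oppr0).
case/NovikovE=> _ lsym0 rcomm0; apply/admissible_NovikovE; split=> // x y z.
  apply: (@scalerS_eq0 _ 8).
  by rewrite apl_defect_by_twist // !lsym0 !rcomm0
    !(scaler0, subrr, addr0, subr0, oppr0).
apply: (@scalerS_eq0 _ 8).
by rewrite adm_defect_by_twist // !lsym0 !rcomm0
  !(scaler0, subrr, addr0, subr0, oppr0).
Qed.

Lemma APLP_NP_twist (dot : A -> A -> A) :
  bilinear_op dot -> commutative dot -> bilinear_op circ ->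
  APLP_identities dot circ <-> NP_identities dot (twist circ).
Proof.
move=> dot_bil dotC bil; split.
  case/APLP_identitiesE=> aplp1_0 aplp2_0.
  have np1_0 x y z : np1_defect dot (twist circ) x y z = 0.
    by rewrite np1_defect_twist // !aplp1_0 !aplp2_0
      !(scaler0, subrr, addr0, subr0, oppr0).
  apply/NP_identitiesE; split=> // x y z; apply: (@scalerS_eq0 _ 1).
  by rewrite np2_defect_twist // !aplp2_0 !np1_0
    !(scaler0, subrr, addr0, subr0, oppr0).
case/NP_identitiesE=> np1_0 np2_0.
have aplp2_0 x y z : aplp2_defect dot circ x y z = 0.
  apply: (@scalerS_eq0 _ 2).
  by rewrite aplp2_defect_by_twist // !np1_0 !np2_0
    !(scaler0, subrr, addr0, subr0, oppr0).
apply/APLP_identitiesE; split=> // x y z.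
by rewrite aplp1_defect_by_twist // !aplp2_0 !np1_0
  !(scaler0, subrr, addr0, subr0, oppr0).
Qed.

End CharZero.

Theorem proposition3p39 (F : fieldType) (A : vectType F)
  (charF0 : [pchar F] =i pred0)
  (dot circ : A -> A -> A)
  (Hdot : comm_assoc_alg dot) (Hcirc : bilinear_op circ) :
  let star := fun x y : A => circ x y - 2%:R *: circ y x in
  (APLP_identities dot circ <-> NP_identities dot star) /\
  (admissible_Novikov_Poisson dot circ <-> Novikov_Poisson dot star).
Proof.
move=> star; have -> : star = twist circ by [].
have [dot_bil [dotC _]] := Hdot.
have aplp_np := APLP_NP_twist charF0 dot_bil dotC Hcirc.
have adm_nov := admissible_Novikov_twist charF0 Hcirc.
split; first exact: aplp_np.
split=> [[[_ [_ aplp]] adm] | [_ [nov np]]].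
  by split=> //; split; [apply/adm_nov | apply/aplp_np].
have adm := (proj2 adm_nov) nov.
split=> //; split=> //; split; first exact: admissible_Novikov_anti_pre_Lie adm.
by apply/aplp_np.
Qed.
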